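(* Consider the setting in the context with $\rho>0$, symmetric $P_i,Q_i\in\mathbb{R}^{n\times n}$, and let $(\check{\bm{W}}^*,\hat{\bm{W}}^*,\lambda^* )$ be a KKT point of (P1), $\bm{Z}^*=(\check{\bm{W}}^*,\hat{\bm{W}}^* )$. If $\bm{G}_1^{\dagger}\succ0$, $\bm{G}_2\succ\bm{G}_3$, $0<\gamma<2$ and $\lambda^0=\bm{0}$, then for every $k\ge1$ $$\bm{F}(\overline{\bm{Z}}^k)-\bm{F}(\bm{Z}^* )\le\frac1{2k}\Big(\|\check{\bm{W}}^0-\check{\bm{W}}^*\|^2_{\bm{G}_1^{\dagger}}+\|\hat{\bm{W}}^0-\hat{\bm{W}}^*\|^2_{\bm{G}_2}\Big),\qquad \overline{\bm{Z}}^k=\frac1k\sum_{j=1}^k\bm{Z}^j,$$ where $\bm{Z}^j=(\check{\bm{W}}^j,\hat{\bm{W}}^j)$ are the iterates of the algorithm.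
   Context: Let $\mathcal{G}=(\mathcal{V},\mathcal{E})$ be a connected undirected graph with $\mathcal{V}=\{1,\dots,N\}$, $N\ge 2$, and let $d_i$ be the degree of $i$. Variables are $\check{\bm{w}}_i,\hat{\bm{w}}_i\in\mathbb{R}^n$; write $\check{\bm{W}}=(\check{\bm{w}}_1,\dots,\check{\bm{w}}_N)$, $\hat{\bm{W}}$ likewise, $\bm{z}_i=(\check{\bm{w}}_i,\hat{\bm{w}}_i)$, $\bm{Z}=(\check{\bm{W}},\hat{\bm{W}})$. The matrix $\bm{A}\in\mathbb{R}^{|\mathcal{E}|n\times Nn}$ has one block row per edge $\{i,j\}$ ($i<j$) with $I_n$ in block column $i$, $-I_n$ in block column $j$, zeros elsewhere; $A_i$ is its $i$-th block column, so $A_i^TA_i=d_iI_n$. Each $f_i:\mathbb{R}^n\times\mathbb{R}^n\to\mathbb{R}$ is differentiable, jointly convex, with $\nabla f_i$ Lipschitz with constant $C_i$. Let $\mu_1\ge0$, $\mu_2>0$, $F_i(\bm{z}_i)=f_i(\check{\bm{w}}_i,\hat{\bm{w}}_i)+\frac{\mu_1}{2}\|\check{\bm{w}}_i\|^2+\frac{\mu_2}{2}\|\hat{\bm{w}}_i\|^2$, $\bm{F}(\bm{Z})=\sum_iF_i(\bm{z}_i)$, and $m$ a constant with $0<m\le\mu_2$. Problem (P1): minimize $\bm{F}(\bm{Z})$ s.t. $\bm{A}\check{\bm{W}}=0$; a KKT point is $(\check{\bm{W}}^*,\hat{\bm{W}}^*,\lambda^* )$ with $\bm{A}\check{\bm{W}}^*=0$,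 $A_i^T\lambda^*=\nabla_{\check{\bm{w}}_i}F_i(\bm{z}_i^* )$, $\nabla_{\hat{\bm{w}}_i}F_i(\bm{z}_i^* )=0$. Algorithm: with $\mathcal{L}_\rho=\bm{F}(\bm{Z})-\lambda^T\bm{A}\check{\bm{W}}+\frac\rho2\|\bm{A}\check{\bm{W}}\|^2$, from arbitrary $\check{\bm{W}}^0,\hat{\bm{W}}^0$ and given $\lambda^0$, for $k=0,1,\dots$: (i) for all $i$ in parallel $\check{\bm{w}}_i^{k+1}=\arg\min_{\check{\bm{w}}_i}\mathcal{L}_\rho(\check{\bm{w}}_i,\check{\bm{W}}^k_{-i},\hat{\bm{W}}^k,\lambda^k)+\frac12\|\check{\bm{w}}_i-\check{\bm{w}}_i^k\|^2_{P_i}$; (ii) $\lambda^{k+1}=\lambda^k-\gamma\rho\bm{A}\check{\bm{W}}^{k+1}$; (iii) for all $i$ in parallel $\hat{\bm{w}}_i^{k+1}=\arg\min_{\hat{\bm{w}}_i}F_i(\check{\bm{w}}_i^{k+1},\hat{\bm{w}}_i)+\frac12\|\hat{\bm{w}}_i-\hat{\bm{w}}_i^k\|^2_{Q_i}$. Notation: $\|x\|^2_S=x^TSx$; $\bm{G}_1=\mathrm{blkdiag}(\rho d_iI_n+P_i)_i$, $\bm{G}_1^{\dagger}=\bm{G}_1-\rho\bm{A}^T\bm{A}$, $\bm{G}_2=\mathrm{blkdiag}(Q_i)_i$, $\bm{G}_3=\mathrm{blkdiag}\big(\frac{C_i}{m}(C_i+m)I_n\big)_i$. *)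

From HB Require Import structures.
From mathcomp Require Import all_boot all_order all_algebra.
From mathcomp Require Import all_classical all_reals all_analysis.
Set Implicit Arguments. Unset Strict Implicit. Unset Printing Implicit Defensive.
Import Order.TTheory GRing.Theory Num.Theory.
Import numFieldNormedType.Exports.
Local Open Scope ring_scope.

Section Defs.
Variable R : realType.

Definition dotv n (u v : 'rV[R]_n) : R := \sum_(j < n) u ord0 j * v ord0 j.
Definition sqnorm n (v : 'rV[R]_n) : R := dotv v v.
Definition qf n (S : 'M[R]_n) (v : 'rV[R]_n) : R := (v *m S *m v^T) ord0 ord0.

Definition has_gradient n (f : 'rV[R]_n * 'rV[R]_n -> R)
  (gc gh : 'rV[R]_n * 'rV[R]_n -> 'rV[R]_n) : Prop :=
  forall z, differentiable f z /\
    forall v, 'd f z v = dotv (gc z) v.1 + dotv (gh z) v.2.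

Definition jointly_convex n (f : 'rV[R]_n * 'rV[R]_n -> R) : Prop :=
  forall (z1 z2 : 'rV[R]_n * 'rV[R]_n) (t : R), 0 <= t -> t <= 1 ->
    f (t *: z1 + (1 - t) *: z2) <= t * f z1 + (1 - t) * f z2.

Definition grad_lipschitz n (gc gh : 'rV[R]_n * 'rV[R]_n -> 'rV[R]_n) (C : R) :=
  forall z z' : 'rV[R]_n * 'rV[R]_n,
    Num.sqrt (sqnorm (gc z - gc z') + sqnorm (gh z - gh z'))
    <= C * Num.sqrt (sqnorm (z.1 - z'.1) + sqnorm (z.2 - z'.2)).

Definition edge N (e : rel 'I_N) :=
  {p : 'I_N * 'I_N | ((val p.1 < val p.2)%N && e p.1 p.2)}.

Definition degree N (e : rel 'I_N) (i : 'I_N) : nat := #|[set j | e i j]|.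

Variables (N n : nat) (e : rel 'I_N).

(* the edge-node incidence operator A (block row per edge {i,j}, i<j:
   I_n in block column i, -I_n in block column j) and its adjoint *)
Definition Aop (W : 'I_N -> 'rV[R]_n) : edge e -> 'rV[R]_n :=
  fun p => W (val p).1 - W (val p).2.
Definition ATop (lam : edge e -> 'rV[R]_n) (i : 'I_N) : 'rV[R]_n :=
  \sum_(p : edge e | (val p).1 == i) lam p - \sum_(p : edge e | (val p).2 == i) lam p.
Definition sqnormE (u : edge e -> 'rV[R]_n) : R := \sum_(p : edge e) sqnorm (u p).
Definition dotE (u v : edge e -> 'rV[R]_n) : R := \sum_(p : edge e) dotv (u p) (v p).

Variables (f : 'I_N -> 'rV[R]_n * 'rV[R]_n -> R) (mu1 mu2 : R).

Definition Floc (i : 'I_N) (z : 'rV[R]_n * 'rV[R]_n) : R :=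
  f i z + mu1 / 2 * sqnorm z.1 + mu2 / 2 * sqnorm z.2.
Definition Ftot (Wc Wh : 'I_N -> 'rV[R]_n) : R := \sum_i Floc i (Wc i, Wh i).

Variable rho : R.

Definition Lrho (Wc Wh : 'I_N -> 'rV[R]_n) (lam : edge e -> 'rV[R]_n) : R :=
  Ftot Wc Wh - dotE lam (Aop Wc) + rho / 2 * sqnormE (Aop Wc).

(* ||W||^2_{G1^dagger}, G1^dagger = blkdiag(rho d_i I + P_i) - rho A^T A *)
Definition G1dag_q (P : 'I_N -> 'M[R]_n) (W : 'I_N -> 'rV[R]_n) : R :=
  \sum_i (rho * (degree e i)%:R * sqnorm (W i) + qf (P i) (W i))
  - rho * sqnormE (Aop W).
Definition G2_q (Q : 'I_N -> 'M[R]_n) (W : 'I_N -> 'rV[R]_n) : R :=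
  \sum_i qf (Q i) (W i).
Definition G3_q (C : 'I_N -> R) (m : R) (W : 'I_N -> 'rV[R]_n) : R :=
  \sum_i (C i / m * (C i + m)) * sqnorm (W i).

Definition upd (W : 'I_N -> 'rV[R]_n) (i : 'I_N) (x : 'rV[R]_n) : 'I_N -> 'rV[R]_n :=
  fun j => if j == i then x else W j.

Definition avg (W : nat -> 'I_N -> 'rV[R]_n) (k : nat) : 'I_N -> 'rV[R]_n :=
  fun i => k%:R^-1 *: \sum_(1 <= j < k.+1) W j i.

End Defs.

Arguments Aop {R N n} e W _.
Arguments ATop {R N n} e lam i.
Arguments sqnormE {R N n} e u.
Arguments dotE {R N n} e u v.
Arguments Lrho {R N n} e f mu1 mu2 rho Wc Wh lam.

From HB Require Import structures.
From mathcomp Require Import all_boot all_order all_algebra.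
From mathcomp Require Import all_classical all_reals all_analysis.
From mathcomp Require Import ring lra.
Import Order.TTheory GRing.Theory Num.Theory.
Import numFieldNormedType.Exports.
Local Open Scope ring_scope.
Set Implicit Arguments. Unset Strict Implicit. Unset Printing Implicit Defensive.

(* The proof is a Lyapunov argument. Let
     Phi_k = ||W^k - W^star||^2_{G1dag} / 2 + ||What^k - What^star||^2_{G2} / 2
             + ||lambda^k||^2 / (2 gamma rho).
   At each node, the first-order conditions of the two proximal steps, convexity of f_i
   at the intermediate point (W^{k+1}_i, What^k_i), the descent lemma in the second
   block and Young's inequality bound the local objective gap; the Lipschitz error is
   absorbed by G2 > G3. Summed over the nodes, the parallel x-updates produce the G1dag
   quadratic through the three-point identity, and the dual update turns
   <lambda^k, A W^{k+1}> into a difference of ||lambda||^2, leaving the nonnegative slack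
   (1 - gamma/2) rho ||A W^{k+1}||^2. Hence F(Z^{k+1}) - F(Z^star) <= Phi_k - Phi_{k+1};
   telescoping from lambda^0 = 0 and Jensen's inequality for the convex F give the
   ergodic bound. *)

Lemma young_mulr_le (R : realFieldType) (mu c s w : R) : 0 < mu ->
  c * s * w <= mu / 2 * w ^+ 2 + c ^+ 2 / (2 * mu) * s ^+ 2.
Proof.
move=> mu0; have -> : mu / 2 * w ^+ 2 + c ^+ 2 / (2 * mu) * s ^+ 2
  = c * s * w + mu / 2 * (w - c * s / mu) ^+ 2 by field; rewrite gt_eqF.
by rewrite lerDl mulr_ge0 ?sqr_ge0 ?divr_ge0 ?ltW.
Qed.

Section InnerProduct.
Variables (R : realType) (n : nat).
Implicit Types (u v w z : 'rV[R]_n) (a t : R) (S : 'M[R]_n).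

Lemma dotvC u v : dotv u v = dotv v u.
Proof. by apply: eq_bigr => j _; rewrite mulrC. Qed.

Lemma dotvDl u w v : dotv (u + w) v = dotv u v + dotv w v.
Proof. by rewrite /dotv -big_split; apply: eq_bigr => j _; rewrite mxE mulrDl. Qed.

Lemma dotvZl a u v : dotv (a *: u) v = a * dotv u v.
Proof. by rewrite /dotv mulr_sumr; apply: eq_bigr => j _; rewrite mxE mulrA. Qed.

Lemma dotvNl u v : dotv (- u) v = - dotv u v.
Proof. by rewrite -scaleN1r dotvZl mulN1r. Qed.

Lemma dotvBl u w v : dotv (u - w) v = dotv u v - dotv w v.
Proof. by rewrite dotvDl dotvNl. Qed.

Lemma dotv0l v : dotv 0 v = 0.
Proof. by rewrite /dotv big1 // => j _; rewrite mxE mul0r. Qed.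

Lemma dotvDr u v w : dotv u (v + w) = dotv u v + dotv u w.
Proof. by rewrite !(dotvC u) dotvDl. Qed.

Lemma dotvZr a u v : dotv u (a *: v) = a * dotv u v.
Proof. by rewrite !(dotvC u) dotvZl. Qed.

Lemma dotvNr u v : dotv u (- v) = - dotv u v.
Proof. by rewrite !(dotvC u) dotvNl. Qed.

Lemma dotvBr u v w : dotv u (v - w) = dotv u v - dotv u w.
Proof. by rewrite dotvDr dotvNr. Qed.

Lemma dotvBrC u v w : dotv u (v - w) = - dotv u (w - v).
Proof. by rewrite -dotvNr opprB. Qed.

Lemma dotv0r v : dotv v 0 = 0.
Proof. by rewrite dotvC dotv0l. Qed.

Lemma dotv_suml (I : Type) (r : seq I) (P : pred I) (F : I -> 'rV[R]_n) v :
  dotv (\sum_(i <- r | P i) F i) v = \sum_(i <- r | P i) dotv (F i) v.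
Proof. by elim/big_rec2: _ => [|i w x _ <-]; rewrite ?dotv0l ?dotvDl. Qed.

Lemma sqnorm_ge0 v : 0 <= sqnorm v.
Proof. by apply: sumr_ge0 => j _; rewrite -expr2 sqr_ge0. Qed.

Lemma sqnorm_eq0 v : (sqnorm v == 0) = (v == 0).
Proof.
apply/eqP/eqP => [|->]; last exact: dotv0l.
move/eqP; rewrite psumr_eq0 => [/allP v0|j _]; last by rewrite -expr2 sqr_ge0.
apply/rowP => j; rewrite mxE; apply/eqP.
by have := v0 j (mem_index_enum j); rewrite mulf_eq0 orbb.
Qed.

Lemma sqnorm0 : sqnorm (0 : 'rV[R]_n) = 0.
Proof. exact: dotv0l. Qed.

Lemma sqnormD u v : sqnorm (u + v) = sqnorm u + 2 * dotv u v + sqnorm v.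
Proof. by rewrite /sqnorm !dotvDl !dotvDr (dotvC v u); ring. Qed.

Lemma sqnormB u v : sqnorm (u - v) = sqnorm u - 2 * dotv u v + sqnorm v.
Proof. by rewrite /sqnorm !dotvBl !dotvBr (dotvC v u); ring. Qed.

Lemma sqnormBC u v : sqnorm (u - v) = sqnorm (v - u).
Proof. by rewrite -opprB /sqnorm dotvNl dotvNr opprK. Qed.

Lemma sqnormZ a u : sqnorm (a *: u) = a ^+ 2 * sqnorm u.
Proof. by rewrite /sqnorm dotvZl dotvZr mulrA expr2. Qed.

Lemma dotv_le_sqrt u v : dotv u v <= Num.sqrt (sqnorm u) * Num.sqrt (sqnorm v).
Proof.
have [->|u0] := eqVneq u 0; first by rewrite dotv0l mulr_ge0 ?sqrtr_ge0.
have [->|v0] := eqVneq v 0; first by rewrite dotv0r mulr_ge0 ?sqrtr_ge0.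
have sqrt_gt0 w : w != 0 -> 0 < Num.sqrt (sqnorm w).
  by rewrite sqrtr_gt0 lt0r sqnorm_ge0 sqnorm_eq0 andbT.
have := sqnorm_ge0 (Num.sqrt (sqnorm v) *: u - Num.sqrt (sqnorm u) *: v).
rewrite sqnormB !sqnormZ dotvZl dotvZr !sqr_sqrtr ?sqnorm_ge0 //.
set su := Num.sqrt (sqnorm u); set sv := Num.sqrt (sqnorm v).
have uv : sqnorm u * sqnorm v = (su * sv) ^+ 2 by rewrite exprMn !sqr_sqrtr ?sqnorm_ge0.
rewrite [sqnorm v * _]mulrC uv => key.
have : 0 <= (su * sv) * (su * sv - dotv u v) by lra.
by rewrite pmulr_rge0 ?subr_ge0 // mulr_gt0 ?sqrt_gt0.
Qed.

Lemma sqnorm_taylor (c : R) u v :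
  c / 2 * sqnorm v - c / 2 * sqnorm u = c * dotv u (v - u) + c / 2 * sqnorm (v - u).
Proof. by rewrite sqnormB dotvBr /sqnorm (dotvC v u); field. Qed.

Lemma sqnorm_convex u v t :
  0 <= t -> t <= 1 ->
  sqnorm (t *: u + (1 - t) *: v) <= t * sqnorm u + (1 - t) * sqnorm v.
Proof.
move=> t0 t1; have : 0 <= t * (1 - t) * sqnorm (u - v) by rewrite !mulr_ge0 ?sqnorm_ge0 ?subr_ge0.
by rewrite sqnormB sqnormD !sqnormZ dotvZl dotvZr; nra.
Qed.

Lemma dotv_mulmxE S u v : dotv (u *m S) v = (u *m S *m v^T) ord0 ord0.
Proof. by rewrite /dotv [RHS]mxE; apply: eq_bigr => j _; rewrite [v^T _ _]mxE. Qed.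

Lemma qfE S v : qf S v = dotv (v *m S) v.
Proof. by rewrite dotv_mulmxE. Qed.

Lemma dotv_mulmx_sym S u v : S^T = S -> dotv (u *m S) v = dotv (v *m S) u.
Proof.
move=> sS; rewrite !dotv_mulmxE -[in LHS](trmxK (u *m S *m v^T)) mxE.
by rewrite !trmx_mul trmxK sS mulmxA.
Qed.

Lemma qf_shift S d u t : S^T = S ->
  qf S (d + t *: u) = qf S d + 2 * t * dotv (d *m S) u + t ^+ 2 * qf S u.
Proof.
move=> sS; rewrite !qfE mulmxDl -scalemxAl dotvDl !dotvDr !dotvZl !dotvZr.
by rewrite (dotv_mulmx_sym u d sS); ring.
Qed.

Lemma qf_three_point S u v z : S^T = S ->
  2 * dotv ((u - v) *m S) (u - z) = qf S (u - v) + qf S (u - z) - qf S (v - z).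
Proof.
move=> sS; have -> : v - z = (u - z) + (-1) *: (u - v).
  by rewrite scaleN1r opprB [RHS]addrC addrA subrK.
by rewrite qf_shift // (dotv_mulmx_sym (u - z)) //; ring.
Qed.

Lemma qf0 S : qf S 0 = 0.
Proof. by rewrite qfE mul0mx dotv0l. Qed.

End InnerProduct.

Section DirectionalDerivative.
Variables (R : realType) (V : normedModType R).
Implicit Types (f : V -> R) (z w : V) (a b d K : R).
Local Open Scope classical_set_scope.

Lemma diff_ge_of_minorant f z w a b : differentiable f z ->
  (forall t, 0 < t -> t <= 1 -> a * t - b * t ^+ 2 <= f (z + t *: w) - f z) ->
  a <= 'd f z w.
Proof.
move=> df lb; rewrite -deriveE //.
pose q h := h^-1 *: ((f \o shift z) (h *: w) - f z).
have q_cvg : q @ 0^'+ --> 'D_w f z.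
  exact/cvg_dnbhs_at_right/diff_derivable.
have : (fun h => q h + b * h) @ 0^'+ --> 'D_w f z + b * 0.
  by apply: cvgD => //; apply: cvgMl_tmp; exact: cvg_at_right_filter cvg_id.
rewrite mulr0 addr0 => /cvgr_to_ge; apply; near=> h.
have h0 : 0 < h by near: h; exact: nbhs_right_gt.
have h1 : h <= 1 by near: h; exact: nbhs_right_ltW.
have hi : 0 < h^-1 by rewrite invr_gt0.
have := lb h h0 h1; rewrite -(ler_pM2l hi) => lbh.
rewrite -lerBlDr /q /= [h *: w + z]addrC; apply: le_trans lbh.
suff -> : h^-1 * (a * h - b * h ^+ 2) = a - b * h by [].
by field; rewrite gt_eqF.
Unshelve. all: by end_near.
Qed.

Lemma is_derive_segment f z w t : differentiable f (z + t *: w) ->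
  is_derive t 1 (fun s => f (z + s *: w)) ('d f (z + t *: w) w).
Proof.
move=> df.
have quotE : (fun h => h^-1 *: (((fun s => f (z + s *: w)) \o shift t) (h *: 1)
                                  - f (z + t *: w)))
  = (fun h => h^-1 *: ((f \o shift (z + t *: w)) (h *: w) - f (z + t *: w))).
  apply/funext => h /=; congr (_ *: (f _ - _)).
  by rewrite [h *: 1]mulr1 scalerDl addrCA addrA.
have dfw := diff_derivable (v := w) df.
split; first by rewrite /derivable quotE.
by rewrite /derive quotE -/(derive f (z + t *: w) w) deriveE.
Qed.

Lemma segment_increment_le f z w d K :
  (forall t, differentiable f (z + t *: w)) ->
  (forall t, 0 <= t -> t <= 1 -> 'd f (z + t *: w) w - d <= K * t) ->
  f (z + w) - f z <= d + K / 2.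
Proof.
move=> df dK.
pose p : {poly R} := d *: 'X + (K / 2) *: 'X^2.
pose h := (fun s : R => f (z + s *: w)) - horner p.
have h_der (t : R) : is_derive t 1 h ('d f (z + t *: w) w - p^`().[t]).
  by apply: is_deriveB; exact: is_derive_segment.
have h_derivable (t : R) : derivable h t 1 by case: (h_der t).
have h_nonincr : {in `[0, 1]%R &, {homo h : x y /~ x <= y}}.
  apply: ler0_derive1_le_cc.
  - by move=> x _; exact: h_derivable.
  - move=> x; rewrite in_itv /= => /andP[x0 x1].
    case: (h_der x) => _ E; rewrite derive1E E /p !poly.derivE !hornerE /=.
    have := dK x (ltW x0) (ltW x1); lra.
  - by apply: derivable_within_continuous => x _; exact: h_derivable.
have := h_nonincr 1 0; rewrite !in_itv /= !lexx ler01 => /(_ isT isT isT).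
rewrite /h /p /= !fctE !hornerE scale0r addr0 scale1r /= !mulr1 !mulr0; lra.
Qed.

End DirectionalDerivative.

Section SmoothConvex.
Variables (R : realType) (n : nat) (f : 'rV[R]_n * 'rV[R]_n -> R).
Variables (gc gh : 'rV[R]_n * 'rV[R]_n -> 'rV[R]_n) (C : R).
Hypotheses (f_grad : has_gradient f gc gh) (f_convex : jointly_convex f).
Hypothesis grad_lip : grad_lipschitz gc gh C.

Lemma gradient_ineq z z' :
  dotv (gc z) (z'.1 - z.1) + dotv (gh z) (z'.2 - z.2) <= f z' - f z.
Proof.
have [df dfE] := f_grad z; have := dfE (z' - z); rewrite /= => <-.
have := diff_ge_of_minorant (b := 0) (a := f z - f z') (w := z' - z) (differentiableN df).
rewrite diffN // !fctE lerNr opprB; apply => t t0 t1.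
have := f_convex z' z (ltW t0) t1.
have -> : t *: z' + (1 - t) *: z = z + t *: (z' - z).
  by rewrite scalerBl scale1r scalerBr addrCA addrA.
rewrite ?fctE mul0r subr0; lra.
Qed.

Lemma lipschitz_const_ge0 (v : 'rV[R]_n) : v != 0 -> 0 <= C.
Proof.
move=> v0; have := grad_lip (v, 0) (0, 0).
rewrite /= !subr0 sqnorm0 !addr0 => lip.
have sv : 0 < Num.sqrt (sqnorm v) by rewrite sqrtr_gt0 lt0r sqnorm_ge0 sqnorm_eq0 v0.
by rewrite -(pmulr_lge0 _ sv); apply: le_trans lip; exact: sqrtr_ge0.
Qed.

Lemma dotv_gh_lipschitz z z' w : dotv (gh z - gh z') w
  <= C * Num.sqrt (sqnorm (z.1 - z'.1) + sqnorm (z.2 - z'.2)) * Num.sqrt (sqnorm w).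
Proof.
apply: le_trans (dotv_le_sqrt _ _) _; apply: ler_wpM2r; first exact: sqrtr_ge0.
apply: le_trans (grad_lip z z'); rewrite ler_sqrt ?addr_ge0 ?sqnorm_ge0 //.
by rewrite lerDr sqnorm_ge0.
Qed.

Lemma descent_snd x y y' :
  f (x, y') - f (x, y) <= dotv (gh (x, y)) (y' - y) + C / 2 * sqnorm (y' - y).
Proof.
have := @segment_increment_le _ _ f (x, y) (0, y' - y) (dotv (gh (x, y)) (y' - y))
  (C * sqnorm (y' - y)).
have -> : (x, y) + (0, y' - y) = (x, y') by congr pair; rewrite /= ?addr0 // addrC subrK.
rewrite mulrAC; apply; first by move=> t; case: (f_grad ((x, y) + t *: (0, y' - y))).
move=> t t0 t1; case: (f_grad ((x, y) + t *: (0, y' - y))) => _ ->.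
rewrite /= dotv0r add0r -dotvBl; apply: le_trans (dotv_gh_lipschitz _ _ _) _.
rewrite /= scaler0 addr0 subrr sqnorm0 add0r addrAC subrr add0r sqnormZ.
rewrite sqrtrM ?sqr_ge0 // sqrtr_sqr ger0_norm //.
have : Num.sqrt (sqnorm (y' - y)) ^+ 2 = sqnorm (y' - y) by rewrite sqr_sqrtr ?sqnorm_ge0.
move: (sqrtr_ge0 (sqnorm (y' - y))); nra.
Qed.

(* The [y]-block is updated after [x], so convexity is used at the intermediate
   point [(x, y)] and the descent lemma bridges [y] to [y']. *)
Lemma block_update_gap (mu : R) x y y' xs ys : 0 < mu ->
  f (x, y') - f (xs, ys) <= dotv (gc (x, y)) (x - xs) + dotv (gh (x, y')) (y' - ys)
    + mu / 2 * sqnorm (y' - ys) + C / mu * (C + mu) / 2 * sqnorm (y' - y).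
Proof.
move=> mu0.
have descent := descent_snd x y y'.
have cvx := gradient_ineq (x, y) (xs, ys).
have lip := dotv_gh_lipschitz (x, y') (x, y) (ys - y').
rewrite /= subrr sqnorm0 add0r (sqnormBC ys) in lip.
have young := young_mulr_le C (Num.sqrt (sqnorm (y' - y))) (Num.sqrt (sqnorm (y' - ys))) mu0.
rewrite !sqr_sqrtr ?sqnorm_ge0 // in young.
have -> : C / mu * (C + mu) / 2 = C ^+ 2 / (2 * mu) + C / 2 by field; rewrite gt_eqF.
move: descent cvx lip; rewrite /= !dotvBr !dotvBl; lra.
Qed.

End SmoothConvex.

Section Incidence.
Variables (R : realType) (N n : nat) (e : rel 'I_N).
Implicit Types (W U : 'I_N -> 'rV[R]_n) (lam u w : edge e -> 'rV[R]_n) (t : R).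

Lemma dotE_shift lam u w t :
  dotE e lam (fun p => u p + t *: w p) = dotE e lam u + t * dotE e lam w.
Proof. by rewrite /dotE mulr_sumr -big_split; apply: eq_bigr => p _; rewrite dotvDr dotvZr. Qed.

Lemma sqnormE_shift u w t : sqnormE e (fun p => u p + t *: w p)
  = sqnormE e u + 2 * t * dotE e u w + t ^+ 2 * sqnormE e w.
Proof.
rewrite /sqnormE /dotE !mulr_sumr -!big_split; apply: eq_bigr => p _.
by rewrite sqnormD sqnormZ dotvZr mulrA.
Qed.

Lemma sqnormE_ge0 u : 0 <= sqnormE e u.
Proof. by apply: sumr_ge0 => p _; exact: sqnorm_ge0. Qed.

Lemma Aop_upd_shift W i x v t : Aop e (upd W i (x + t *: v))
  = fun p => Aop e (upd W i x) p + t *: Aop e (upd (fun=> 0) i v) p.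
Proof.
apply/funext => p; rewrite /Aop /upd.
case: ((val p).1 == i); case: ((val p).2 == i).
- by rewrite !subrr scaler0 addr0.
- by rewrite !subr0 addrAC.
- by rewrite sub0r scalerN opprD addrA.
- by rewrite subrr scaler0 addr0.
Qed.

Lemma sum_upd0 (F : 'I_N -> 'rV[R]_n -> R) i v : (forall j, F j 0 = 0) ->
  \sum_j F j (upd (fun=> 0) i v j) = F i v.
Proof.
move=> F0; rewrite (bigD1 i) //= big1 ?addr0 => [|j /negPf ji]; by rewrite /upd ?eqxx ?ji.
Qed.

Lemma sum_dotv_ATop (lams : 'I_N -> edge e -> 'rV[R]_n) U :
  \sum_i dotv (ATop e (lams i) i) (U i)
  = \sum_p (dotv (lams (val p).1 p) (U (val p).1) - dotv (lams (val p).2 p) (U (val p).2)).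
Proof.
rewrite sumrB /ATop; under eq_bigr do rewrite dotvBl !dotv_suml.
rewrite sumrB; congr (_ - _); rewrite (exchange_big_dep xpredT) //=;
  by apply: eq_bigr => p _; apply: big_pred1 => i; rewrite /= eq_sym.
Qed.

Lemma dotE_Aop lam U : dotE e lam (Aop e U) = \sum_i dotv (ATop e lam i) (U i).
Proof. by rewrite (sum_dotv_ATop (fun=> lam) U); apply: eq_bigr => p _; rewrite dotvBr. Qed.

Lemma dotE_Aop_upd0 lam i v :
  dotE e lam (Aop e (upd (fun=> 0) i v)) = dotv (ATop e lam i) v.
Proof. by rewrite dotE_Aop (@sum_upd0 (fun j => dotv (ATop e lam j))) // => j; exact: dotv0r. Qed.

End Incidence.

Section EdgeSums.
Variables (R : realType) (N n : nat) (e : rel 'I_N).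
Hypotheses (e_sym : forall i j, e i j = e j i) (e_irr : forall i, ~~ e i i).

Lemma sum_edge (G : 'I_N * 'I_N -> R) :
  \sum_(p : edge e) G (val p) = \sum_(q | (val q.1 < val q.2)%N && e q.1 q.2) G q.
Proof.
rewrite [RHS](reindex_omap (val : edge e -> _) insub); last by move=> q Pq; rewrite insubT.
by apply: eq_bigl => -[q Pq] /=; rewrite insubT Pq /=; apply/esym/eqP.
Qed.

Lemma sum_degree (h : 'I_N -> R) :
  \sum_(p : edge e) (h (val p).1 + h (val p).2) = \sum_i (degree e i)%:R * h i.
Proof.
pose lt_edge i j := (val i < val j)%N && e i j.
rewrite (sum_edge (fun q => h q.1 + h q.2)) big_mkcond /=.
rewrite -(pair_bigA _ (fun i j => if lt_edge i j then h i + h j else 0)) /=.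
have -> : \sum_i \sum_j (if lt_edge i j then h i + h j else 0)
   = \sum_i \sum_j ((lt_edge i j)%:R * h i) + \sum_i \sum_j ((lt_edge i j)%:R * h j).
  rewrite -big_split; apply: eq_bigr => i _; rewrite -big_split; apply: eq_bigr => j _.
  by case: (lt_edge i j); rewrite /= ?mul1r ?mul0r ?addr0.
rewrite [X in _ + X]exchange_big /= -big_split; apply: eq_bigr => i _.
rewrite -big_split /= /degree mulr_natl -sumr_const [RHS]big_mkcond /=.
apply: eq_bigr => j _; rewrite -mulrDl inE /lt_edge.
case: (ltngtP (val i) (val j)) => /= [ij|ji|/val_inj ->].
- by rewrite addr0; case: (e i j); rewrite ?mul1r ?mul0r.
- by rewrite e_sym add0r; case: (e i j); rewrite ?mul1r ?mul0r.
- by rewrite (negPf (e_irr j)) addr0 mul0r.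
Qed.

(* [D - A^T A] is the signless adjacency operator: it pairs the endpoints of each edge. *)
Lemma G1dag_qE (rho : R) (P : 'I_N -> 'M[R]_n) (U : 'I_N -> 'rV[R]_n) :
  G1dag_q e rho P U
  = \sum_i qf (P i) (U i) + 2 * rho * \sum_(p : edge e) dotv (U (val p).1) (U (val p).2).
Proof.
have degE : \sum_i rho * (degree e i)%:R * sqnorm (U i)
    = rho * \sum_(p : edge e) (sqnorm (U (val p).1) + sqnorm (U (val p).2)).
  by rewrite (sum_degree (fun i => sqnorm (U i))) mulr_sumr; apply: eq_bigr => i _; rewrite mulrA.
have edgeE : sqnormE e (Aop e U) = \sum_(p : edge e) (sqnorm (U (val p).1) + sqnorm (U (val p).2))
    - 2 * \sum_(p : edge e) dotv (U (val p).1) (U (val p).2).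
  by rewrite mulr_sumr -sumrB; apply: eq_bigr => p _; rewrite /Aop sqnormB; ring.
by rewrite /G1dag_q big_split /= degE edgeE; ring.
Qed.

Lemma edge_neq (p : edge e) : (val p).2 != (val p).1.
Proof. by apply/negP => /eqP E; have := valP p; rewrite E ltnn. Qed.

Lemma Aop_upd_fst (W : 'I_N -> 'rV[R]_n) x (p : edge e) :
  Aop e (upd W (val p).1 x) p = x - W (val p).2.
Proof. by rewrite /Aop /upd eqxx (negPf (edge_neq p)). Qed.

Lemma Aop_upd_snd (W : 'I_N -> 'rV[R]_n) x (p : edge e) :
  Aop e (upd W (val p).2 x) p = W (val p).1 - x.
Proof. by rewrite /Aop /upd eqxx eq_sym (negPf (edge_neq p)). Qed.

Lemma edge_polarization (a1 a2 b1 b2 s : 'rV[R]_n) :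
  dotv (a1 - b2) (s - a1) - dotv (b1 - a2) (s - a2)
  = dotv (b1 - s) (b2 - s) - dotv (a1 - s) (a2 - s) - dotv (a1 - b1) (a2 - b2)
    - sqnorm (a1 - a2).
Proof.
rewrite /sqnorm !dotvBl !dotvBr ?(dotvC a2 a1) ?(dotvC b1 a1) ?(dotvC b2 a1) ?(dotvC s a1)
  ?(dotvC b1 a2) ?(dotvC b2 a2) ?(dotvC s a2) ?(dotvC b2 b1) ?(dotvC s b1) ?(dotvC s b2).
ring.
Qed.

(* The Jacobi (parallel) x-update sees the neighbours' old values; summed over
   the nodes, this mismatch is exactly the [rho (D - A^T A)] part of [G1^dagger]. *)
Lemma jacobi_coupling (rho : R) (P : 'I_N -> 'M[R]_n) (Wk Wn Ws : 'I_N -> 'rV[R]_n) :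
  (forall i, (P i)^T = P i) -> (forall p, Aop e Ws p = 0) ->
  \sum_i dotv (rho *: ATop e (Aop e (upd Wk i (Wn i))) i + (Wn i - Wk i) *m P i)
              (Ws i - Wn i)
  = (G1dag_q e rho P (fun i => Wk i - Ws i) - G1dag_q e rho P (fun i => Wn i - Ws i)
     - G1dag_q e rho P (fun i => Wn i - Wk i)) / 2 - rho * sqnormE e (Aop e Wn).
Proof.
move=> P_sym feas.
have Ws_edge (p : edge e) : Ws (val p).2 = Ws (val p).1.
  by apply/esym/eqP; rewrite -subr_eq0; apply/eqP/feas.
have edgesE : \sum_p (dotv (Aop e (upd Wk (val p).1 (Wn (val p).1)) p) (Ws (val p).1 - Wn (val p).1)
                   - dotv (Aop e (upd Wk (val p).2 (Wn (val p).2)) p) (Ws (val p).2 - Wn (val p).2))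
  = \sum_(p : edge e) dotv (Wk (val p).1 - Ws (val p).1) (Wk (val p).2 - Ws (val p).2)
  - \sum_(p : edge e) dotv (Wn (val p).1 - Ws (val p).1) (Wn (val p).2 - Ws (val p).2)
  - \sum_(p : edge e) dotv (Wn (val p).1 - Wk (val p).1) (Wn (val p).2 - Wk (val p).2)
  - sqnormE e (Aop e Wn).
  rewrite /sqnormE -!sumrB; apply: eq_bigr => p _.
  by rewrite Aop_upd_fst Aop_upd_snd !Ws_edge edge_polarization.
have nodesE : \sum_i dotv ((Wn i - Wk i) *m P i) (Ws i - Wn i)
  = (\sum_i qf (P i) (Wk i - Ws i) - \sum_i qf (P i) (Wn i - Ws i)
     - \sum_i qf (P i) (Wn i - Wk i)) / 2.
  rewrite -!sumrB mulr_suml; apply: eq_bigr => i _.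
  have := qf_three_point (Wn i) (Wk i) (Ws i) (P_sym i).
  rewrite dotvBrC; lra.
under eq_bigr do rewrite dotvDl dotvZl.
rewrite big_split /= -mulr_sumr sum_dotv_ATop edgesE nodesE !G1dag_qE; lra.
Qed.

End EdgeSums.

Section LocalSteps.
Variables (R : realType) (N n : nat) (e : rel 'I_N).
Variables (f : 'I_N -> 'rV[R]_n * 'rV[R]_n -> R).
Variables (gc gh : 'I_N -> 'rV[R]_n * 'rV[R]_n -> 'rV[R]_n) (mu1 mu2 rho : R).
Hypothesis f_grad : forall i, has_gradient (f i) (gc i) (gh i).

Lemma Ftot_upd (W Y : 'I_N -> 'rV[R]_n) i x x' :
  Ftot f mu1 mu2 (upd W i x) Y - Ftot f mu1 mu2 (upd W i x') Y
  = Floc f mu1 mu2 i (x, Y i) - Floc f mu1 mu2 i (x', Y i).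
Proof.
have others : \sum_(j | j != i) Floc f mu1 mu2 j (upd W i x j, Y j)
    = \sum_(j | j != i) Floc f mu1 mu2 j (upd W i x' j, Y j).
  by apply: eq_bigr => j /negPf ji; rewrite /upd ji.
rewrite /Ftot (bigD1 i) //= [X in _ - X](bigD1 i) //= others /upd eqxx.
by rewrite opprD addrACA subrr addr0.
Qed.

Lemma x_step_optimality i (P : 'M[R]_n) (W Y : 'I_N -> 'rV[R]_n)
    (lam : edge e -> 'rV[R]_n) x' : P^T = P ->
  (forall x, Lrho e f mu1 mu2 rho (upd W i x') Y lam + qf P (x' - W i) / 2
          <= Lrho e f mu1 mu2 rho (upd W i x) Y lam + qf P (x - W i) / 2) ->
  forall v, 0 <= dotv (gc i (x', Y i) + mu1 *: x'
    + (rho *: ATop e (Aop e (upd W i x')) i + (x' - W i) *m P - ATop e lam i)) v.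
Proof.
move=> P_sym opt v.
have [df dfE] := f_grad i (x', Y i); have := dfE (v, 0); rewrite /= dotv0r addr0 => dE.
set delta := upd (fun=> 0) i v.
suff : - (mu1 * dotv x' v + (rho * dotv (ATop e (Aop e (upd W i x')) i) v
           + dotv ((x' - W i) *m P) v - dotv (ATop e lam i) v)) <= 'd (f i) (x', Y i) (v, 0).
  (* generalized first, as [rewrite dotvDl] would otherwise unfold [ATop] *)
  move: (ATop e lam i) (ATop e (Aop e (upd W i x')) i) => A_lam A_x.
  by rewrite !dotvDl dotvNl !dotvZl -dE; lra.
apply: (diff_ge_of_minorant
  (b := mu1 / 2 * sqnorm v + rho / 2 * sqnormE e (Aop e delta) + qf P v / 2) df).
move=> t t0 t1; have := opt (x' + t *: v).
have -> : (x', Y i) + t *: (v, 0) = (x' + t *: v, Y i) by congr pair; rewrite /= scaler0 addr0.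
have := Ftot_upd W Y i (x' + t *: v) x'.
rewrite /Lrho Aop_upd_shift dotE_shift sqnormE_shift !dotE_Aop_upd0.
have -> : x' + t *: v - W i = (x' - W i) + t *: v by rewrite addrAC.
rewrite qf_shift // /Floc /= sqnormD sqnormZ dotvZr; lra.
Qed.

Lemma y_step_optimality i (Q : 'M[R]_n) x y y' : Q^T = Q ->
  (forall y0, Floc f mu1 mu2 i (x, y') + qf Q (y' - y) / 2
              <= Floc f mu1 mu2 i (x, y0) + qf Q (y0 - y) / 2) ->
  forall u, 0 <= dotv (gh i (x, y') + mu2 *: y' + (y' - y) *m Q) u.
Proof.
move=> Q_sym opt u.
have [df dfE] := f_grad i (x, y'); have := dfE (0, u); rewrite /= dotv0r add0r => dE.
suff : - (mu2 * dotv y' u + dotv ((y' - y) *m Q) u) <= 'd (f i) (x, y') (0, u).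
  by rewrite !dotvDl dotvZl -dE; lra.
apply: (diff_ge_of_minorant (b := mu2 / 2 * sqnorm u + qf Q u / 2) df) => t t0 t1.
have := opt (y' + t *: u).
have -> : (x, y') + t *: (0, u) = (x, y' + t *: u) by congr pair; rewrite /= scaler0 addr0.
have -> : y' + t *: u - y = (y' - y) + t *: u by rewrite addrAC.
rewrite qf_shift // /Floc /= sqnormD sqnormZ dotvZr; lra.
Qed.

Lemma local_gap i (Q : 'M[R]_n) (C m : R) (a x' y y' xs ys : 'rV[R]_n) :
  jointly_convex (f i) -> grad_lipschitz (gc i) (gh i) C ->
  0 <= mu1 -> 0 < m -> m <= mu2 -> Q^T = Q ->
  C / m * (C + m) * sqnorm (y' - y) <= qf Q (y' - y) ->
  (forall v, 0 <= dotv (gc i (x', y) + mu1 *: x' + a) v) ->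
  (forall u, 0 <= dotv (gh i (x', y') + mu2 *: y' + (y' - y) *m Q) u) ->
  Floc f mu1 mu2 i (x', y') - Floc f mu1 mu2 i (xs, ys)
    <= dotv a (xs - x') + (qf Q (y - ys) - qf Q (y' - ys)) / 2.
Proof.
move=> f_cvx f_lip mu1_ge0 m_gt0 m_le Q_sym Q_ge x_opt y_opt.
have gap := block_update_gap (f_grad i) f_cvx f_lip x' y y' xs ys m_gt0.
have := x_opt (xs - x'); have := y_opt (ys - y'); rewrite !dotvDl !dotvZl.
have := qf_three_point y' y ys Q_sym.
have := sqnorm_taylor mu1 x' xs; have := sqnorm_taylor mu2 y' ys.
have : 0 <= mu1 / 2 * sqnorm (xs - x') by rewrite mulr_ge0 ?divr_ge0 ?sqnorm_ge0.
have : m / 2 * sqnorm (ys - y') <= mu2 / 2 * sqnorm (ys - y').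
  by rewrite ler_wpM2r ?sqnorm_ge0 // ler_pM2r.
move: gap; rewrite /Floc /= !(dotvBrC _ x') !(dotvBrC _ y') (sqnormBC y' ys).
lra.
Qed.

End LocalSteps.

Definition family_convex (R : realType) (N n : nat)
    (F : ('I_N -> 'rV[R]_n) -> ('I_N -> 'rV[R]_n) -> R) :=
  forall (U1 V1 U2 V2 : 'I_N -> 'rV[R]_n) (t : R), 0 <= t -> t <= 1 ->
    F (fun i => t *: U1 i + (1 - t) *: U2 i) (fun i => t *: V1 i + (1 - t) *: V2 i)
    <= t * F U1 V1 + (1 - t) * F U2 V2.

Lemma Ftot_convex (R : realType) (N n : nat) (f : 'I_N -> 'rV[R]_n * 'rV[R]_n -> R)
    (mu1 mu2 : R) :
  (forall i, jointly_convex (f i)) -> 0 <= mu1 -> 0 <= mu2 ->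
  family_convex (Ftot f mu1 mu2).
Proof.
move=> f_cvx mu1_ge0 mu2_ge0 U1 V1 U2 V2 t t0 t1.
rewrite /Ftot !mulr_sumr -big_split /=; apply: ler_sum => i _; rewrite /Floc /=.
have := f_cvx i (U1 i, V1 i) (U2 i, V2 i) t t0 t1.
have c1 := sqnorm_convex (U1 i) (U2 i) t0 t1; have c2 := sqnorm_convex (V1 i) (V2 i) t0 t1.
have m1 := ler_wpM2l (divr_ge0 mu1_ge0 (ler0n R 2)) c1.
have m2 := ler_wpM2l (divr_ge0 mu2_ge0 (ler0n R 2)) c2.
rewrite /=; nra.
Qed.

Lemma avgS (R : realType) (N n : nat) (W : nat -> 'I_N -> 'rV[R]_n) k : (1 <= k)%N ->
  avg W k.+1
  = (fun i => (k%:R / k.+1%:R) *: avg W k i + (1 - k%:R / k.+1%:R) *: W k.+1 i).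
Proof.
move=> k1; apply/funext => i; rewrite /avg big_nat_recr //= scalerDr scalerA.
have k0 : k%:R != 0 :> R by rewrite pnatr_eq0 -lt0n.
have k10 : k.+1%:R != 0 :> R by rewrite pnatr_eq0.
congr (_ + _); last by congr (_ *: _); field.
by congr (_ *: _); field; rewrite nat1r k10 k0.
Qed.

Lemma avg_jensen (R : realType) (N n : nat)
    (F : ('I_N -> 'rV[R]_n) -> ('I_N -> 'rV[R]_n) -> R) (U V : nat -> 'I_N -> 'rV[R]_n) k :
  family_convex F -> (1 <= k)%N ->
  k%:R * F (avg U k) (avg V k) <= \sum_(1 <= j < k.+1) F (U j) (V j).
Proof.
move=> F_cvx; elim: k => [//|k IH] _.
have [->|k_gt0] := posnP k.
  have avg1 (W : nat -> 'I_N -> 'rV[R]_n) : avg W 1 = W 1%N.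
    by apply/funext => i; rewrite /avg big_nat1 invr1 scale1r.
  by rewrite big_nat1 mul1r !avg1.
rewrite !avgS // big_nat_recr //=.
set t := k%:R / k.+1%:R.
have t0 : 0 <= t by rewrite divr_ge0.
have t1 : t <= 1 by rewrite ler_pdivrMr ?ltr0Sn // mul1r ler_nat.
have kt : k.+1%:R * t = k%:R by rewrite /t mulrC -mulrA mulVf ?mulr1 // pnatr_eq0.
have kt1 : k.+1%:R * (1 - t) = 1 by rewrite mulrBr kt mulr1 -natrB // subSnn.
have := ler_wpM2l (ler0n R k.+1) (F_cvx (avg U k) (avg V k) (U k.+1) (V k.+1) t t0 t1).
rewrite mulrDr (mulrA k.+1%:R t) (mulrA k.+1%:R (1 - t)) kt kt1 mul1r.
have := IH k_gt0; lra.
Qed.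

Lemma posdef_ge0 (R : realType) (N n : nat) (q : ('I_N -> 'rV[R]_n) -> R) :
  q (fun=> 0) = 0 -> (forall W, (exists i, W i != 0) -> 0 < q W) -> forall W, 0 <= q W.
Proof.
move=> q0 q_pos W; have [nz|W0] := pselect (exists i, W i != 0); first exact/ltW/q_pos.
suff -> : W = fun=> 0 by rewrite q0.
by apply/funext => i; apply/eqP; apply: contra_notT W0 => Wi; exists i.
Qed.

Section Convergence.
Variables (R : realType) (N n : nat) (e : rel 'I_N).
Variables (f : 'I_N -> 'rV[R]_n * 'rV[R]_n -> R).
Variables (gc gh : 'I_N -> 'rV[R]_n * 'rV[R]_n -> 'rV[R]_n) (C : 'I_N -> R).
Variables (mu1 mu2 m rho gamma : R) (P Q : 'I_N -> 'M[R]_n).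
Variables (Wcs Whs : 'I_N -> 'rV[R]_n).
Variables (Wc Wh : nat -> 'I_N -> 'rV[R]_n) (lam : nat -> edge e -> 'rV[R]_n).
Hypotheses (e_sym : forall i j, e i j = e j i) (e_irr : forall i, ~~ e i i).
Hypotheses (f_grad : forall i, has_gradient (f i) (gc i) (gh i))
  (f_convex : forall i, jointly_convex (f i))
  (f_lip : forall i, grad_lipschitz (gc i) (gh i) (C i)).
Hypotheses (mu1_ge0 : 0 <= mu1) (m_gt0 : 0 < m) (m_le_mu2 : m <= mu2) (rho_gt0 : 0 < rho).
Hypotheses (P_sym : forall i, (P i)^T = P i) (Q_sym : forall i, (Q i)^T = Q i).
Hypothesis feasible : forall p, Aop e Wcs p = 0.
Hypotheses
  (G1_pos : forall W : 'I_N -> 'rV[R]_n, (exists i, W i != 0) -> 0 < G1dag_q e rho P W)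
  (G2_gt_G3 : forall W : 'I_N -> 'rV[R]_n, (exists i, W i != 0) -> G3_q C m W < G2_q Q W).
Hypotheses (gamma_gt0 : 0 < gamma) (gamma_lt2 : gamma < 2).
Hypothesis lam0 : lam 0%N = fun=> 0.
Hypothesis x_step : forall k i (x : 'rV[R]_n),
  Lrho e f mu1 mu2 rho (upd (Wc k) i (Wc k.+1 i)) (Wh k) (lam k)
    + qf (P i) (Wc k.+1 i - Wc k i) / 2
  <= Lrho e f mu1 mu2 rho (upd (Wc k) i x) (Wh k) (lam k) + qf (P i) (x - Wc k i) / 2.
Hypothesis dual_step :
  forall k, lam k.+1 = (fun p => lam k p - (gamma * rho) *: Aop e (Wc k.+1) p).
Hypothesis y_step : forall k i (y : 'rV[R]_n),
  Floc f mu1 mu2 i (Wc k.+1 i, Wh k.+1 i) + qf (Q i) (Wh k.+1 i - Wh k i) / 2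
  <= Floc f mu1 mu2 i (Wc k.+1 i, y) + qf (Q i) (y - Wh k i) / 2.

Lemma G1dag_q_ge0 W : 0 <= G1dag_q e rho P W.
Proof.
apply: posdef_ge0 G1_pos W.
have A0 p : sqnorm (Aop e (fun=> 0 : 'rV[R]_n) p) = 0 by rewrite /Aop subrr sqnorm0.
rewrite /G1dag_q /sqnormE (eq_bigr _ (fun p _ => A0 p)) big1_eq mulr0 subr0.
by rewrite big1 // => i _; rewrite sqnorm0 qf0 mulr0 addr0.
Qed.

Lemma G3_le_qfQ i v : C i / m * (C i + m) * sqnorm v <= qf (Q i) v.
Proof.
have G3_le_G2 W : G3_q C m W <= G2_q Q W.
  rewrite -subr_ge0; move: W; apply: (@posdef_ge0 _ _ _ (fun W => G2_q Q W - G3_q C m W)).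
    by rewrite /G2_q /G3_q !big1 ?subr0 // => j _; rewrite ?qf0 ?sqnorm0 ?mulr0.
  by move=> W /G2_gt_G3; rewrite subr_gt0.
have := G3_le_G2 (upd (fun=> 0) i v); rewrite /G2_q /G3_q.
rewrite (@sum_upd0 _ _ _ (fun j => qf (Q j))) => [|j]; last exact: qf0.
by rewrite (@sum_upd0 _ _ _ (fun j w => C j / m * (C j + m) * sqnorm w)) // => j;
  rewrite sqnorm0 mulr0.
Qed.

Lemma G2_q_ge0 W : 0 <= G2_q Q W.
Proof.
apply: sumr_ge0 => i _; have [->|Wi] := eqVneq (W i) 0; first by rewrite qf0.
have C_ge0 := lipschitz_const_ge0 (f_lip i) Wi.
apply: le_trans (G3_le_qfQ i (W i)).
have m_ge0 := ltW m_gt0.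
by rewrite mulr_ge0 ?sqnorm_ge0 // mulr_ge0 ?divr_ge0 ?addr_ge0.
Qed.

Definition lyapunov k := G1dag_q e rho P (fun i => Wc k i - Wcs i) / 2
  + G2_q Q (fun i => Wh k i - Whs i) / 2 + sqnormE e (lam k) / (2 * gamma * rho).

Lemma lyapunov_ge0 k : 0 <= lyapunov k.
Proof.
by rewrite !addr_ge0 ?divr_ge0 ?G1dag_q_ge0 ?G2_q_ge0 ?sqnormE_ge0 ?mulr_ge0 ?ltW.
Qed.

Lemma dual_sqnormE k : sqnormE e (lam k.+1) = sqnormE e (lam k)
  - 2 * (gamma * rho) * dotE e (lam k) (Aop e (Wc k.+1))
  + (gamma * rho) ^+ 2 * sqnormE e (Aop e (Wc k.+1)).
Proof.
have -> : lam k.+1 = fun p => lam k p + (- (gamma * rho)) *: Aop e (Wc k.+1) p.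
  by rewrite dual_step; apply/funext => p; rewrite scaleNr.
by rewrite sqnormE_shift sqrrN mulrN mulNr.
Qed.

Lemma lyapunov_decrease k :
  Ftot f mu1 mu2 (Wc k.+1) (Wh k.+1) - Ftot f mu1 mu2 Wcs Whs
  <= lyapunov k - lyapunov k.+1.
Proof.
pose a i := rho *: ATop e (Aop e (upd (Wc k) i (Wc k.+1 i))) i
  + (Wc k.+1 i - Wc k i) *m P i - ATop e (lam k) i.
have node i : Floc f mu1 mu2 i (Wc k.+1 i, Wh k.+1 i) - Floc f mu1 mu2 i (Wcs i, Whs i)
  <= dotv (a i) (Wcs i - Wc k.+1 i)
     + (qf (Q i) (Wh k i - Whs i) - qf (Q i) (Wh k.+1 i - Whs i)) / 2.
  apply: (local_gap f_grad (Wcs i) (Whs i) (f_convex i) (f_lip i) mu1_ge0 m_gt0 m_le_mu2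
    (Q_sym i) (G3_le_qfQ i _)).
  - exact: (x_step_optimality f_grad (P_sym i) (x_step k i)).
  - exact: (y_step_optimality f_grad (Q_sym i) (y_step k i)).
rewrite /Ftot -sumrB; apply: le_trans (ler_sum _ (fun i _ => node i)) _.
rewrite big_split /= -mulr_suml sumrB.
under eq_bigr do rewrite /a dotvBl.
rewrite sumrB jacobi_coupling //.
under [X in _ - X + _]eq_bigr do rewrite dotvBr.
rewrite sumrB -!dotE_Aop.
have -> : dotE e (lam k) (Aop e Wcs) = 0.
  by rewrite /dotE big1 // => p _; rewrite feasible dotv0r.
have slack : 0 <= (1 - gamma / 2) * rho * sqnormE e (Aop e (Wc k.+1)).
  have g : 0 <= 1 - gamma / 2 by move: gamma_lt2; lra.
  by apply: mulr_ge0 (mulr_ge0 g (ltW rho_gt0)) (sqnormE_ge0 _).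
have := G1dag_q_ge0 (fun i => Wc k.+1 i - Wc k i).
have dual : (sqnormE e (lam k) - sqnormE e (lam k.+1)) / (2 * gamma * rho)
  = dotE e (lam k) (Aop e (Wc k.+1)) - gamma * rho / 2 * sqnormE e (Aop e (Wc k.+1)).
  by rewrite dual_sqnormE; field; rewrite !gt_eqF.
rewrite /lyapunov /G2_q; lra.
Qed.

Lemma sum_gap_le k :
  \sum_(1 <= j < k.+1) (Ftot f mu1 mu2 (Wc j) (Wh j) - Ftot f mu1 mu2 Wcs Whs)
  <= (G1dag_q e rho P (fun i => Wc 0%N i - Wcs i)
      + G2_q Q (fun i => Wh 0%N i - Whs i)) / 2.
Proof.
have -> : (G1dag_q e rho P (fun i => Wc 0%N i - Wcs i)
      + G2_q Q (fun i => Wh 0%N i - Whs i)) / 2 = lyapunov 0.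
  by rewrite /lyapunov lam0 /sqnormE big1 ?mul0r ?addr0 ?mulrDl // => p _; rewrite sqnorm0.
apply: le_trans (_ : _ <= lyapunov 0 - lyapunov k) _; last by rewrite gerBl lyapunov_ge0.
have -> : lyapunov 0 - lyapunov k = \sum_(0 <= j < k) (lyapunov j - lyapunov j.+1).
  by rewrite -opprB -telescope_sumr // -sumrN; apply: eq_bigr => j _; rewrite opprB.
by rewrite big_add1; apply: ler_sum => j _; exact: lyapunov_decrease.
Qed.

End Convergence.

Unset Implicit Arguments. Set Strict Implicit.

Theorem corollary1 (R : realType) (N n : nat) (e : rel 'I_N)
  (f : 'I_N -> 'rV[R]_n * 'rV[R]_n -> R)
  (gc gh : 'I_N -> 'rV[R]_n * 'rV[R]_n -> 'rV[R]_n)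
  (C : 'I_N -> R) (mu1 mu2 m rho gamma : R)
  (P Q : 'I_N -> 'M[R]_n)
  (Wcs Whs : 'I_N -> 'rV[R]_n) (lams : edge e -> 'rV[R]_n)
  (Wc Wh : nat -> 'I_N -> 'rV[R]_n) (lam : nat -> edge e -> 'rV[R]_n) :
  (* connected undirected simple graph, N >= 2 *)
  (2 <= N)%N ->
  (forall i j, e i j = e j i) -> (forall i, ~~ e i i) ->
  (forall i j, connect e i j) ->
  (* the f_i *)
  (forall i, has_gradient (f i) (gc i) (gh i)) ->
  (forall i, jointly_convex (f i)) ->
  (forall i, grad_lipschitz (gc i) (gh i) (C i)) ->
  (* parameters *)
  0 <= mu1 -> 0 < mu2 -> 0 < m -> m <= mu2 -> 0 < rho ->
  (forall i, (P i)^T = P i) -> (forall i, (Q i)^T = Q i) ->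
  (* KKT point of (P1) *)
  (forall p, Aop e Wcs p = 0) ->
  (forall i, ATop e lams i = gc i (Wcs i, Whs i) + mu1 *: Wcs i) ->
  (forall i, gh i (Wcs i, Whs i) + mu2 *: Whs i = 0) ->
  (* G1^dagger > 0 and G2 > G3 *)
  (forall W : 'I_N -> 'rV[R]_n, (exists i, W i != 0) -> 0 < G1dag_q e rho P W) ->
  (forall W : 'I_N -> 'rV[R]_n, (exists i, W i != 0) -> G3_q C m W < G2_q Q W) ->
  0 < gamma -> gamma < 2 ->
  (* the algorithm, started with lam^0 = 0 *)
  lam 0%N = (fun _ => 0) ->
  (forall k i (x : 'rV[R]_n),
     Lrho e f mu1 mu2 rho (upd (Wc k) i (Wc k.+1 i)) (Wh k) (lam k)
       + qf (P i) (Wc k.+1 i - Wc k i) / 2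
     <= Lrho e f mu1 mu2 rho (upd (Wc k) i x) (Wh k) (lam k)
       + qf (P i) (x - Wc k i) / 2) ->
  (forall k, lam k.+1 = (fun p => lam k p - (gamma * rho) *: Aop e (Wc k.+1) p)) ->
  (forall k i (y : 'rV[R]_n),
     Floc f mu1 mu2 i (Wc k.+1 i, Wh k.+1 i) + qf (Q i) (Wh k.+1 i - Wh k i) / 2
     <= Floc f mu1 mu2 i (Wc k.+1 i, y) + qf (Q i) (y - Wh k i) / 2) ->
  forall k : nat, (1 <= k)%N ->
    Ftot f mu1 mu2 (avg Wc k) (avg Wh k) - Ftot f mu1 mu2 Wcs Whs
    <= (2 * k%:R)^-1 * (G1dag_q e rho P (fun i => Wc 0%N i - Wcs i)
                       + G2_q Q (fun i => Wh 0%N i - Whs i)).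
Proof.
move=> _ e_sym e_irr _ f_grad f_convex f_lip mu1_ge0 mu2_gt0 m_gt0 m_le_mu2 rho_gt0
  P_sym Q_sym feasible _ _ G1_pos G2_gt_G3 gamma_gt0 gamma_lt2 lam0 x_step dual_step y_step
  k k_ge1.
have gap_sum := sum_gap_le Whs e_sym e_irr f_grad f_convex f_lip mu1_ge0 m_gt0 m_le_mu2
  rho_gt0 P_sym Q_sym feasible G1_pos G2_gt_G3 gamma_gt0 gamma_lt2 lam0 x_step dual_step
  y_step k.
have jensen := avg_jensen Wc Wh (Ftot_convex f_convex mu1_ge0 (ltW mu2_gt0)) k_ge1.
rewrite sumrB sumr_const_nat subn1 /= -mulr_natl in gap_sum.
set D0 := G1dag_q _ _ _ _ + G2_q _ _ in gap_sum *.
have k_gt0 : 0 < k%:R :> R by rewrite ltr0n.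
rewrite -(ler_pM2l k_gt0) mulrBr.
have -> : k%:R * ((2 * k%:R)^-1 * D0) = D0 / 2 by field; rewrite gt_eqF.
lra.
Qed.
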